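(* Let $S>0$, $T>0$, $\sigma_{LN}>0$ and let $C:=\mathrm{BS}(S,S,T,\sigma_{LN})$ be the at-the-money ($K=S$) Black–Scholes call price with zero interest rate, where $\mathrm{BS}(S,K,T,\sigma)=S\,\mathcal N(d_+)-K\,\mathcal N(d_-)$, $d_\pm=\frac{\ln(S/K)\pm\sigma^2T/2}{\sigma\sqrt T}$, $\mathcal N$ the standard normal distribution function. Define $\eta_0:=1$ and, for $k\ge1$, $\eta_k:=\sum_{j=0}^{k-1}\frac{\eta_j\,\eta_{k-1-j}}{(j+1)(2j+1)}$. Then $$\sigma_{LN}=\sqrt{\frac{2\pi}{T}}\,\frac CS\sum_{k=0}^\infty\frac{\pi^k\eta_k}{4^k(2k+1)}\Big(\frac CS\Big)^{2k}.$$ *)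

From Stdlib Require Import Reals List.
From Coquelicot Require Import Coquelicot.
Open Scope R_scope.

Definition normal_cdf (x : R) : R :=
  RInt_gen (fun t => exp (- (t ^ 2) / 2) / sqrt (2 * PI)) (Rbar_locally m_infty) (at_point x).

Definition d_plus (S K T sigma : R) : R :=
  (ln (S / K) + sigma ^ 2 * T / 2) / (sigma * sqrt T).
Definition d_minus (S K T sigma : R) : R :=
  (ln (S / K) - sigma ^ 2 * T / 2) / (sigma * sqrt T).
Definition BS (S K T sigma : R) : R :=
  S * normal_cdf (d_plus S K T sigma) - K * normal_cdf (d_minus S K T sigma).

(* eta_0 = 1, eta_k = sum_{j=0}^{k-1} eta_j eta_{k-1-j} / ((j+1)(2j+1)).
   etas n is the list [eta_0; ...; eta_n]. *)
Fixpoint etas (n : nat) : list R :=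
  match n with
  | O => 1 :: nil
  | S k =>
      let l := etas k in
      l ++ (fold_right Rplus 0
              (map (fun j => nth j l 0 * nth (k - j) l 0
                             / ((INR j + 1) * (2 * INR j + 1))) (seq 0 (S k)))) :: nil
  end.

Definition eta (k : nat) : R := nth k (etas k) 0.

From Stdlib Require Import Reals List Lia Lra Classical_Pred_Type.
From Coquelicot Require Import Coquelicot.
Open Scope R_scope.

(* At the money [C / S = 2 N(sigma sqrt T / 2) - 1], so with
   [E s = int_0^s exp (- t^2) dt] the claim says that [L y = y B (y^2)], where
   [B z = sum eta_k z^k / (2k+1)], inverts [E]: take [y = E b] with
   [b = sigma sqrt T / (2 sqrt 2)].
   Put [A z = sum eta_k z^k] and [G y = sum eta_k y^(2k+2) / ((k+1)(2k+1))].
   The recursion for [eta] is the Cauchy-product identity [A = 1 + G A] (at [z = y^2]),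
   and termwise [L' = A (y^2)], [G' = 2 L].  Hence [(1 - G) exp (L^2)] has zero
   derivative, so [1 - G = exp (- L^2)] and [(E o L)' = A (y^2) exp (- L^2) = 1],
   i.e. [E (L y) = y].
   For convergence, the partial sums [P_n] of [A (y^2)] satisfy [P_n (E s) <= exp (s^2)]:
   by induction, integrating once gives [H_n (E s) <= s] for the partial sums of [L],
   integrating again [G_n (E s) <= 1 - exp (- s^2)], and [P_(n+1) <= 1 + G_n P_n]
   closes the loop.  So the radius of [A] is at least [E s ^ 2] for every [s]. *)

Lemma exp_le_compat x y : x <= y -> exp x <= exp y.
Proof. intros [H | ->]; [left; apply exp_increasing |]; lra. Qed.

Lemma exp_mul_exp_opp x : exp x * exp (- x) = 1.
Proof. rewrite <- exp_plus, Rplus_opp_r. apply exp_0. Qed.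

Lemma is_derive_continuity_pt (f : R -> R) x l : is_derive f x l -> continuity_pt f x.
Proof.
  intros H. apply continuity_pt_filterlim, (ex_derive_continuous f). now exists l.
Qed.

Lemma is_derive_nonneg_le (f df : R -> R) a b : a <= b ->
  (forall x, a <= x <= b -> is_derive f x (df x)) ->
  (forall x, a <= x <= b -> 0 <= df x) -> f a <= f b.
Proof.
  intros Hab Hd Hpos.
  destruct (MVT_gen f a b df) as [c [Hc Heq]];
    rewrite ?Rmin_left, ?Rmax_right in * by lra.
  - intros x Hx. apply Hd; lra.
  - intros x Hx. apply (is_derive_continuity_pt f x (df x)), Hd; lra.
  - specialize (Hpos c Hc). nra.
Qed.

Lemma is_derive_zero_eq (f : R -> R) a b : a <= b ->
  (forall x, a <= x <= b -> is_derive f x 0) -> f a = f b.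
Proof.
  intros [Hab | <-] Hd; [| reflexivity].
  now apply (eq_is_derive f).
Qed.

Lemma is_derive_sum_f_R0 (f : nat -> R -> R) (d : nat -> R) n x :
  (forall k, (k <= n)%nat -> is_derive (f k) x (d k)) ->
  is_derive (fun y => sum_f_R0 (fun k => f k y) n) x (sum_f_R0 d n).
Proof.
  intros H. pose proof (is_derive_sum_n (V := R_NormedModule) f n x d H) as Hs.
  rewrite sum_n_Reals in Hs. eapply is_derive_ext; [| exact Hs].
  intros t. simpl. now rewrite sum_n_Reals.
Qed.

Lemma CV_radius_le_abs (a b : nat -> R) :
  (forall n, Rabs (b n) <= Rabs (a n)) -> Rbar_le (CV_radius a) (CV_radius b).
Proof.
  intros Hab. eapply is_lub_Rbar_subset; [| apply CV_radius_bounded ..].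
  intros r [M HM]. exists M. intros n. eapply Rle_trans; [| apply HM].
  rewrite !Rabs_mult. apply Rmult_le_compat_r; [apply Rabs_pos | apply Hab].
Qed.

Lemma CV_radius_mul_INR (a : nat -> R) : CV_radius (fun n => INR n * a n) = CV_radius a.
Proof.
  rewrite <- (CV_radius_derive a), <- (CV_radius_incr_1 (PS_derive a)). apply CV_radius_ext.
  intros [| n]; [simpl; unfold zero; simpl; ring | reflexivity].
Qed.

Lemma PSeries_mul_derive (a : nat -> R) z :
  z * PSeries (PS_derive a) z = PSeries (fun n => INR n * a n) z.
Proof.
  rewrite <- PSeries_incr_1. apply PSeries_ext.
  intros [| n]; [simpl; unfold zero; simpl; ring | reflexivity].
Qed.

Lemma sum_f_R0_convolution_le (a b : nat -> R) n :
  (forall k, 0 <= a k) -> (forall k, 0 <= b k) ->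
  sum_f_R0 (fun i => sum_f_R0 (fun j => a j * b (i - j)%nat) i) n
    <= sum_f_R0 a n * sum_f_R0 b n.
Proof.
  intros Ha Hb. destruct n as [| n]; [simpl; lra |].
  rewrite cauchy_finite by lia.
  assert (0 <= sum_f_R0 (fun k => sum_f_R0 (fun l => a (S (l + k)) * b (S n - l)%nat)
                                   (pred (S n - k))) (pred (S n))).
  { apply cond_pos_sum; intros. apply cond_pos_sum; intros. now apply Rmult_le_pos. }
  lra.
Qed.

Lemma sum_f_R0_pow_0 (a : nat -> R) (p : nat -> nat) n :
  (forall k, (0 < p k)%nat) -> sum_f_R0 (fun k => a k * 0 ^ p k) n = 0.
Proof.
  intros Hp. rewrite (sum_eq _ (fun _ => 0)), sum_cte; [ring |].
  intros k _. rewrite pow_i by auto. ring.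
Qed.

Lemma nondecreasing_lim_m_infty (f : R -> R) m :
  (forall x y, x <= y -> f x <= f y) -> (forall x, m <= f x) ->
  exists l, filterlim f (Rbar_locally m_infty) (locally l).
Proof.
  intros Hmono Hbnd. set (E := fun r => exists x, r = - f x).
  destruct (completeness E) as [M [Hub Hlub]].
  - exists (- m). intros r [x ->]. specialize (Hbnd x). lra.
  - exists (- f 0). now exists 0.
  - exists (- M). apply filterlim_locally. intros eps.
    assert (Hx : exists x, M - eps < - f x).
    { apply not_all_not_ex. intros Hnot.
      assert (M <= M - eps) by (apply Hlub; intros r [x ->]; specialize (Hnot x); lra).
      pose proof (cond_pos eps). lra. }
    destruct Hx as [x Hx]. exists x. intros y Hy.
    assert (f y <= f x) by (apply Hmono; lra).
    assert (- f y <= M) by (apply Hub; now exists y).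
    change (Rabs (f y - - M) < eps). apply Rabs_def1; lra.
Qed.

Lemma fold_right_Rplus_seq (f : nat -> R) n :
  fold_right Rplus 0 (map f (seq 0 (S n))) = sum_f_R0 f n.
Proof.
  assert (Hshift : forall a l, fold_right Rplus a l = fold_right Rplus 0 l + a).
  { intros a l. induction l as [| x l IH]; simpl; [| rewrite IH]; ring. }
  induction n as [| n IH]; [simpl; ring |].
  rewrite seq_S, map_app, fold_right_app, Hshift, IH. simpl. ring.
Qed.

Lemma length_etas n : length (etas n) = S n.
Proof. induction n as [| n IH]; [reflexivity |]. simpl. rewrite length_app, IH. simpl. lia. Qed.

Lemma nth_etas n k : (k <= n)%nat -> nth k (etas n) 0 = eta k.
Proof.
  induction n as [| n IH]; intros Hk.
  - now replace k with 0%nat by lia.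
  - destruct (Nat.eq_dec k (S n)) as [-> | Hne]; [reflexivity |].
    simpl etas. rewrite app_nth1 by (rewrite length_etas; lia). apply IH. lia.
Qed.

Definition eta_int (k : nat) : R := eta k / (2 * INR k + 1).
Definition eta_int2 (k : nat) : R := eta k / ((INR k + 1) * (2 * INR k + 1)).

Lemma eta_0 : eta 0 = 1.
Proof. reflexivity. Qed.

Lemma eta_S k : eta (S k) = sum_f_R0 (fun j => eta_int2 j * eta (k - j)) k.
Proof.
  unfold eta at 1. cbn [etas].
  rewrite app_nth2, length_etas, Nat.sub_diag by (rewrite length_etas; lia).
  cbn [nth]. rewrite fold_right_Rplus_seq. apply sum_eq. intros j Hj.
  rewrite !nth_etas by lia. unfold eta_int2. pose proof (pos_INR j). field. lra.
Qed.

Lemma eta_nonneg k : 0 <= eta k.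
Proof.
  induction k as [k IH] using (well_founded_induction Wf_nat.lt_wf).
  destruct k as [| k]; [rewrite eta_0; lra |].
  rewrite eta_S. apply Rle_trans with (sum_f_R0 (fun _ => 0) k); [rewrite sum_cte; lra |].
  apply sum_Rle. intros j Hj. unfold eta_int2. pose proof (pos_INR j).
  apply Rmult_le_pos; [apply Rmult_le_pos | apply IH; lia].
  - apply IH. lia.
  - left. apply Rinv_0_lt_compat. nra.
Qed.

Lemma eta_int_bounds k : 0 <= eta_int k <= eta k.
Proof.
  unfold eta_int. pose proof (eta_nonneg k). pose proof (pos_INR k).
  split; [apply Rmult_le_pos; [lra | left; apply Rinv_0_lt_compat; lra] |].
  apply Rmult_le_reg_r with (2 * INR k + 1); [lra |]. field_simplify; nra.
Qed.

Lemma eta_int2_bounds k : 0 <= eta_int2 k <= eta k.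
Proof.
  unfold eta_int2. pose proof (eta_nonneg k). pose proof (pos_INR k).
  split; [apply Rmult_le_pos; [lra | left; apply Rinv_0_lt_compat; nra] |].
  apply Rmult_le_reg_r with ((INR k + 1) * (2 * INR k + 1)); [nra |]. field_simplify; nra.
Qed.

Definition normal_pdf (t : R) : R := exp (- (t ^ 2) / 2) / sqrt (2 * PI).

Definition normal_int (u : R) : R := RInt normal_pdf 0 u.

(* [gauss_int s] is [int_0^s exp (- t^2) dt]; it is defined through [normal_int]
   so that the substitution [t = sqrt 2 * s] needs no integration theory. *)
Definition gauss_int (s : R) : R := sqrt PI * normal_int (sqrt 2 * s).

Lemma sqrt_2PI_pos : 0 < sqrt (2 * PI).
Proof. apply sqrt_lt_R0. pose proof PI_RGT_0. lra. Qed.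

Lemma normal_pdf_pos t : 0 < normal_pdf t.
Proof. apply Rdiv_lt_0_compat; [apply exp_pos | apply sqrt_2PI_pos]. Qed.

Lemma normal_pdf_opp t : normal_pdf (- t) = normal_pdf t.
Proof. unfold normal_pdf. now replace ((- t) ^ 2) with (t ^ 2) by ring. Qed.

Lemma is_derive_normal_pdf x : is_derive normal_pdf x (- x * normal_pdf x).
Proof.
  unfold normal_pdf. pose proof sqrt_2PI_pos. auto_derive; auto.
  replace (- (x * (x * 1)) * / 2) with (- x ^ 2 / 2) by (unfold Rdiv; ring). field. lra.
Qed.

Lemma continuous_normal_pdf x : continuous normal_pdf x.
Proof. apply (ex_derive_continuous (V := R_NormedModule)). eexists. apply is_derive_normal_pdf. Qed.

Lemma is_derive_normal_int u : is_derive normal_int u (normal_pdf u).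
Proof.
  apply is_derive_RInt with 0; [| apply continuous_normal_pdf].
  apply filter_forall. intros b.
  apply (RInt_correct (V := R_CompleteNormedModule)).
  apply (ex_RInt_continuous (V := R_CompleteNormedModule)). intros; apply continuous_normal_pdf.
Qed.

Lemma normal_int_0 : normal_int 0 = 0.
Proof. apply (RInt_point (V := R_CompleteNormedModule)). Qed.

Lemma normal_int_le u v : u <= v -> normal_int u <= normal_int v.
Proof.
  intros Huv. apply (is_derive_nonneg_le normal_int normal_pdf); auto.
  - intros; apply is_derive_normal_int.
  - intros; left; apply normal_pdf_pos.
Qed.

Lemma normal_int_opp u : normal_int (- u) = - normal_int u.
Proof.
  assert (Hsym : forall v, 0 <= v ->
    normal_int 0 + normal_int (- 0) = normal_int v + normal_int (- v)).
  { intros v Hv. apply (is_derive_zero_eq (fun s => normal_int s + normal_int (- s))); auto.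
    intros x _. replace 0 with (normal_pdf x + (-1) * normal_pdf (- x))
      by (rewrite normal_pdf_opp; ring).
    apply (is_derive_plus (V := R_NormedModule)); [apply is_derive_normal_int |].
    apply (is_derive_comp normal_int (fun s => - s)); [apply is_derive_normal_int |].
    auto_derive; auto. }
  rewrite Ropp_0, normal_int_0 in Hsym.
  destruct (Rle_dec 0 u) as [Hu | Hu].
  - specialize (Hsym u Hu). lra.
  - specialize (Hsym (- u)). rewrite Ropp_involutive in Hsym. lra.
Qed.

Lemma is_derive_gauss_int s : is_derive gauss_int s (exp (- s ^ 2)).
Proof.
  assert (Hs2 : sqrt 2 ^ 2 = 2) by (apply pow2_sqrt; lra).
  replace (exp (- s ^ 2)) with (sqrt PI * (sqrt 2 * normal_pdf (sqrt 2 * s))).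
  - apply is_derive_scal.
    apply (is_derive_comp normal_int (fun s => sqrt 2 * s)); [apply is_derive_normal_int |].
    auto_derive; auto. ring.
  - unfold normal_pdf. rewrite sqrt_mult_alt by lra. pose proof PI_RGT_0.
    assert (0 < sqrt 2) by (apply sqrt_lt_R0; lra).
    assert (0 < sqrt PI) by (apply sqrt_lt_R0; lra).
    replace (- (sqrt 2 * s) ^ 2 / 2) with (- s ^ 2)
      by (rewrite Rpow_mult_distr, Hs2; field).
    field. lra.
Qed.

Lemma gauss_int_0 : gauss_int 0 = 0.
Proof. unfold gauss_int. rewrite Rmult_0_r, normal_int_0. ring. Qed.

Lemma gauss_int_lt u v : u < v -> gauss_int u < gauss_int v.
Proof.
  intros Huv.
  apply (incr_function_le gauss_int m_infty p_infty (fun s => exp (- s ^ 2))); try easy.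
  - intros; apply is_derive_gauss_int.
  - intros; apply exp_pos.
Qed.

Lemma gauss_int_inj u v : gauss_int u = gauss_int v -> u = v.
Proof.
  intros H. destruct (Rtotal_order u v) as [Huv | [Huv | Huv]]; auto;
    apply gauss_int_lt in Huv; lra.
Qed.

Lemma gauss_int_nonneg s : 0 <= s -> 0 <= gauss_int s.
Proof.
  intros [Hs | <-]; rewrite <- gauss_int_0 at 1; [left; now apply gauss_int_lt | lra].
Qed.

Definition eta_poly n y := sum_f_R0 (fun k => eta k * y ^ (2 * k)) n.
Definition eta_poly_int n y := sum_f_R0 (fun k => eta_int k * y ^ (2 * k + 1)) n.
Definition eta_poly_int2 n y := sum_f_R0 (fun k => eta_int2 k * y ^ (2 * k + 2)) n.

Lemma eta_poly_nonneg n y : 0 <= y -> 0 <= eta_poly n y.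
Proof.
  intros Hy. apply cond_pos_sum. intros k.
  apply Rmult_le_pos; [apply eta_nonneg | now apply pow_le].
Qed.

Lemma eta_poly_S_le n y : 0 <= y -> eta_poly (S n) y <= 1 + eta_poly_int2 n y * eta_poly n y.
Proof.
  intros Hy. unfold eta_poly at 1.
  rewrite decomp_sum by lia. simpl pred. rewrite eta_0, Nat.mul_0_r, pow_O, Rmult_1_r.
  apply Rplus_le_compat_l. eapply Rle_trans; [right | apply sum_f_R0_convolution_le].
  - apply sum_eq. intros i _. rewrite eta_S, Rmult_comm, scal_sum.
    apply sum_eq. intros j Hj.
    replace (2 * S i)%nat with (2 * j + 2 + 2 * (i - j))%nat by lia.
    rewrite pow_add. ring.
  - intros k. apply Rmult_le_pos; [apply eta_int2_bounds | now apply pow_le].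
  - intros k. apply Rmult_le_pos; [apply eta_nonneg | now apply pow_le].
Qed.

Lemma is_derive_gauss_int_pow m s :
  is_derive (fun s => gauss_int s ^ S m) s (INR (S m) * gauss_int s ^ m * exp (- s ^ 2)).
Proof.
  replace (INR (S m) * gauss_int s ^ m * exp (- s ^ 2))
    with (INR (S m) * exp (- s ^ 2) * gauss_int s ^ pred (S m)) by (simpl; ring).
  apply is_derive_pow, is_derive_gauss_int.
Qed.

Lemma is_derive_eta_poly_int n s :
  is_derive (fun s => eta_poly_int n (gauss_int s)) s
            (eta_poly n (gauss_int s) * exp (- s ^ 2)).
Proof.
  unfold eta_poly_int, eta_poly. rewrite Rmult_comm, scal_sum.
  apply (is_derive_sum_f_R0 (fun k s => eta_int k * gauss_int s ^ (2 * k + 1))).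
  intros k _. rewrite Nat.add_1_r.
  replace (eta k * gauss_int s ^ (2 * k) * exp (- s ^ 2))
    with (eta_int k * (INR (S (2 * k)) * gauss_int s ^ (2 * k) * exp (- s ^ 2))).
  - apply is_derive_scal, is_derive_gauss_int_pow.
  - unfold eta_int. rewrite S_INR, mult_INR. simpl INR. pose proof (pos_INR k). field. lra.
Qed.

Lemma is_derive_eta_poly_int2 n s :
  is_derive (fun s => eta_poly_int2 n (gauss_int s)) s
            (2 * eta_poly_int n (gauss_int s) * exp (- s ^ 2)).
Proof.
  unfold eta_poly_int2, eta_poly_int.
  replace (2 * _ * exp (- s ^ 2))
    with (sum_f_R0 (fun k => eta_int k * gauss_int s ^ (2 * k + 1) * (2 * exp (- s ^ 2))) n)
    by (rewrite <- scal_sum; ring).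
  apply (is_derive_sum_f_R0 (fun k s => eta_int2 k * gauss_int s ^ (2 * k + 2))).
  intros k _. replace (2 * k + 2)%nat with (S (2 * k + 1)) by lia.
  replace (eta_int k * gauss_int s ^ (2 * k + 1) * (2 * exp (- s ^ 2)))
    with (eta_int2 k * (INR (S (2 * k + 1)) * gauss_int s ^ (2 * k + 1) * exp (- s ^ 2))).
  - apply is_derive_scal, is_derive_gauss_int_pow.
  - unfold eta_int, eta_int2. rewrite S_INR, plus_INR, mult_INR. simpl INR.
    pose proof (pos_INR k). field. lra.
Qed.

Lemma eta_poly_int_le n :
  (forall s, 0 <= s -> eta_poly n (gauss_int s) <= exp (s ^ 2)) ->
  forall s, 0 <= s -> eta_poly_int n (gauss_int s) <= s.
Proof.
  intros HP s Hs.
  assert (Hmono : 0 - eta_poly_int n (gauss_int 0) <= s - eta_poly_int n (gauss_int s)).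
  { apply (is_derive_nonneg_le (fun s => s - eta_poly_int n (gauss_int s))
             (fun s => 1 - eta_poly n (gauss_int s) * exp (- s ^ 2))); auto.
    - intros x _. apply (is_derive_minus (V := R_NormedModule) (fun s => s)).
      + apply (is_derive_id (K := R_AbsRing)).
      + apply is_derive_eta_poly_int.
    - intros x [Hx _]. specialize (HP x Hx). pose proof (exp_pos (- x ^ 2)).
      pose proof (exp_mul_exp_opp (x ^ 2)).
      assert (eta_poly n (gauss_int x) * exp (- x ^ 2) <= exp (x ^ 2) * exp (- x ^ 2))
        by (apply Rmult_le_compat_r; lra).
      lra. }
  unfold eta_poly_int in Hmono |- *. rewrite gauss_int_0, sum_f_R0_pow_0 in Hmono by lia.
  lra.
Qed.

Lemma eta_poly_int2_le n :
  (forall s, 0 <= s -> eta_poly_int n (gauss_int s) <= s) ->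
  forall s, 0 <= s -> eta_poly_int2 n (gauss_int s) <= 1 - exp (- s ^ 2).
Proof.
  intros HH s Hs.
  assert (Hmono : 1 - exp (- 0 ^ 2) - eta_poly_int2 n (gauss_int 0)
                  <= 1 - exp (- s ^ 2) - eta_poly_int2 n (gauss_int s)).
  { apply (is_derive_nonneg_le (fun s => 1 - exp (- s ^ 2) - eta_poly_int2 n (gauss_int s))
      (fun s => 2 * s * exp (- s ^ 2) - 2 * eta_poly_int n (gauss_int s) * exp (- s ^ 2))); auto.
    - intros x _. apply (is_derive_minus (V := R_NormedModule) (fun s => 1 - exp (- s ^ 2))).
      + auto_derive; auto. replace (- (x * (x * 1))) with (- x ^ 2) by ring. ring.
      + apply is_derive_eta_poly_int2.
    - intros x [Hx _]. specialize (HH x Hx). pose proof (exp_pos (- x ^ 2)). nra. }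
  unfold eta_poly_int2 in Hmono |- *. rewrite gauss_int_0, sum_f_R0_pow_0 in Hmono by lia.
  replace (- 0 ^ 2) with 0 in Hmono by ring. rewrite exp_0 in Hmono. lra.
Qed.

Lemma eta_poly_le n s : 0 <= s -> eta_poly n (gauss_int s) <= exp (s ^ 2).
Proof.
  revert s. induction n as [| n IH]; intros s Hs.
  - unfold eta_poly. cbn [sum_f_R0]. rewrite eta_0, Nat.mul_0_r, pow_O.
    pose proof (exp_ineq1_le (s ^ 2)). pose proof (pow2_ge_0 s). lra.
  - pose proof (gauss_int_nonneg s Hs) as Hy.
    pose proof (eta_poly_int2_le n (eta_poly_int_le n IH) s Hs) as HG.
    pose proof (eta_poly_S_le n _ Hy). pose proof (eta_poly_nonneg n _ Hy).
    specialize (IH s Hs). pose proof (exp_mul_exp_opp (s ^ 2)).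
    assert (exp (- s ^ 2) <= 1) by (rewrite <- exp_0; apply exp_le_compat; nra).
    assert (eta_poly_int2 n (gauss_int s) * eta_poly n (gauss_int s)
            <= (1 - exp (- s ^ 2)) * eta_poly n (gauss_int s))
      by (apply Rmult_le_compat_r; lra).
    assert ((1 - exp (- s ^ 2)) * eta_poly n (gauss_int s)
            <= (1 - exp (- s ^ 2)) * exp (s ^ 2)) by (apply Rmult_le_compat_l; lra).
    lra.
Qed.

Lemma CV_radius_eta_ge s : 0 <= s -> Rbar_le (gauss_int s ^ 2) (CV_radius eta).
Proof.
  intros Hs. pose proof (gauss_int_nonneg s Hs) as Hy.
  apply (proj1 (CV_radius_bounded eta)). exists (exp (s ^ 2)). intros n.
  rewrite <- pow_mult, Rabs_pos_eq by (apply Rmult_le_pos; [apply eta_nonneg | now apply pow_le]).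
  eapply Rle_trans; [| apply (eta_poly_le n s Hs)].
  destruct n as [| n]; unfold eta_poly; [simpl; lra |].
  rewrite tech5. pose proof (eta_poly_nonneg n _ Hy). unfold eta_poly in *. lra.
Qed.

Definition inv_gauss_series (y : R) : R := y * PSeries eta_int (y ^ 2).

(* Within the disk of convergence this is [1 - exp (- inv_gauss_series y ^ 2)]. *)
Definition inv_gauss_defect (y : R) : R := y ^ 2 * PSeries eta_int2 (y ^ 2).

Section Inversion.

Variable r : R.
Hypothesis Hr : Rbar_le r (CV_radius eta).

Lemma CV_radius_lt_dominated (c : nat -> R) z : (forall k, 0 <= c k <= eta k) ->
  Rabs z < r -> Rbar_lt (Rabs z) (CV_radius c).
Proof.
  intros Hc Hz. apply Rbar_lt_le_trans with r; [exact Hz |].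
  apply Rbar_le_trans with (CV_radius eta); [exact Hr |].
  apply CV_radius_le_abs. intros k. specialize (Hc k). rewrite !Rabs_pos_eq; lra.
Qed.

Section AtZ.

Variable z : R.
Hypothesis Hz : Rabs z < r.

Let rad_eta : Rbar_lt (Rabs z) (CV_radius eta).
Proof. apply CV_radius_lt_dominated; auto. intros; pose proof (eta_nonneg k); lra. Qed.
Let rad_eta_int : Rbar_lt (Rabs z) (CV_radius eta_int).
Proof. apply CV_radius_lt_dominated; auto. apply eta_int_bounds. Qed.
Let rad_eta_int2 : Rbar_lt (Rabs z) (CV_radius eta_int2).
Proof. apply CV_radius_lt_dominated; auto. apply eta_int2_bounds. Qed.

Lemma PSeries_eta_rec : PSeries eta z = 1 + z * (PSeries eta_int2 z * PSeries eta z).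
Proof.
  rewrite (PSeries_decr_1 eta z) at 1 by now apply CV_radius_inside.
  rewrite eta_0, <- PSeries_mult by auto. do 2 f_equal.
  apply PSeries_ext. intros n. apply eta_S.
Qed.

Lemma PSeries_eta_int_ode :
  PSeries eta_int z + 2 * (z * PSeries (PS_derive eta_int) z) = PSeries eta z.
Proof.
  rewrite PSeries_mul_derive, <- (PSeries_scal 2), <- PSeries_plus.
  - apply PSeries_ext. intros n. unfold PS_plus, PS_scal, eta_int. simpl.
    unfold plus, scal; simpl. unfold mult; simpl. pose proof (pos_INR n). field. lra.
  - now apply CV_radius_inside.
  - apply CV_radius_inside. now rewrite CV_radius_scal, CV_radius_mul_INR by lra.
Qed.

Lemma PSeries_eta_int2_ode :
  PSeries eta_int2 z + z * PSeries (PS_derive eta_int2) z = PSeries eta_int z.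
Proof.
  rewrite PSeries_mul_derive, <- PSeries_plus.
  - apply PSeries_ext. intros n. unfold PS_plus, eta_int2, eta_int. simpl.
    unfold plus; simpl. pose proof (pos_INR n). field. lra.
  - now apply CV_radius_inside.
  - apply CV_radius_inside. now rewrite CV_radius_mul_INR.
Qed.

End AtZ.

Section AtY.

Variable y : R.
Hypothesis Hy : y ^ 2 < r.

Let Hy2 : Rabs (y ^ 2) < r.
Proof. rewrite Rabs_pos_eq; [exact Hy | apply pow2_ge_0]. Qed.

Lemma is_derive_inv_gauss_series : is_derive inv_gauss_series y (PSeries eta (y ^ 2)).
Proof.
  rewrite <- (PSeries_eta_int_ode _ Hy2).
  replace (PSeries eta_int (y ^ 2) + 2 * (y ^ 2 * PSeries (PS_derive eta_int) (y ^ 2)))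
    with (1 * PSeries eta_int (y ^ 2) + y * ((2 * y) * PSeries (PS_derive eta_int) (y ^ 2)))
    by ring.
  apply (is_derive_mult (fun t => t) (fun t => PSeries eta_int (t ^ 2)));
    [apply (is_derive_id (K := R_AbsRing)) | | apply Rmult_comm].
  apply (is_derive_comp (PSeries eta_int) (fun t => t ^ 2));
    [apply is_derive_PSeries, CV_radius_lt_dominated; [apply eta_int_bounds | exact Hy2]
    | auto_derive; auto; ring].
Qed.

Lemma is_derive_inv_gauss_defect : is_derive inv_gauss_defect y (2 * inv_gauss_series y).
Proof.
  unfold inv_gauss_series. rewrite <- (PSeries_eta_int2_ode _ Hy2).
  replace (2 * (y * (PSeries eta_int2 (y ^ 2) + y ^ 2 * PSeries (PS_derive eta_int2) (y ^ 2))))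
    with ((2 * y) * PSeries eta_int2 (y ^ 2)
          + y ^ 2 * ((2 * y) * PSeries (PS_derive eta_int2) (y ^ 2))) by ring.
  apply (is_derive_mult (fun t => t ^ 2) (fun t => PSeries eta_int2 (t ^ 2)));
    [auto_derive; auto; ring | | apply Rmult_comm].
  apply (is_derive_comp (PSeries eta_int2) (fun t => t ^ 2));
    [apply is_derive_PSeries, CV_radius_lt_dominated; [apply eta_int2_bounds | exact Hy2]
    | auto_derive; auto; ring].
Qed.

Lemma PSeries_eta_mul_defect : PSeries eta (y ^ 2) * (1 - inv_gauss_defect y) = 1.
Proof. unfold inv_gauss_defect. pose proof (PSeries_eta_rec _ Hy2). nra. Qed.

End AtY.

Lemma inv_gauss_defect_exp y : 0 <= y -> y ^ 2 < r ->
  (1 - inv_gauss_defect y) * exp (inv_gauss_series y ^ 2) = 1.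
Proof.
  intros Hy0 Hy.
  transitivity ((1 - inv_gauss_defect 0) * exp (inv_gauss_series 0 ^ 2)).
  - symmetry. apply (is_derive_zero_eq
      (fun t => (1 - inv_gauss_defect t) * exp (inv_gauss_series t ^ 2))); auto.
    intros t Ht. assert (Ht2 : t ^ 2 < r) by nra.
    pose proof (PSeries_eta_mul_defect t Ht2) as Hprod.
    set (L := inv_gauss_series t). set (A := PSeries eta (t ^ 2)).
    replace 0 with ((0 - 2 * L) * exp (L ^ 2)
                    + (1 - inv_gauss_defect t) * (INR 2 * A * L ^ pred 2 * exp (L ^ 2))).
    + apply (is_derive_mult (fun t => 1 - inv_gauss_defect t)
                            (fun t => exp (inv_gauss_series t ^ 2))); [| | apply Rmult_comm].
      * apply (is_derive_minus (V := R_NormedModule) (fun _ => 1));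
          [auto_derive; auto | now apply is_derive_inv_gauss_defect].
      * apply (is_derive_comp exp (fun t => inv_gauss_series t ^ 2));
          [apply is_derive_exp | now apply is_derive_pow, is_derive_inv_gauss_series].
    + transitivity (2 * L * exp (L ^ 2) * (A * (1 - inv_gauss_defect t) - 1));
        [simpl | fold A in Hprod; rewrite Hprod]; ring.
  - unfold inv_gauss_defect, inv_gauss_series.
    replace ((0 * PSeries eta_int (0 ^ 2)) ^ 2) with 0 by ring. rewrite exp_0. ring.
Qed.

Lemma gauss_int_inv_gauss_series y : 0 <= y -> y ^ 2 < r ->
  gauss_int (inv_gauss_series y) = y.
Proof.
  intros Hy0 Hy.
  enough (gauss_int (inv_gauss_series 0) - 0 = gauss_int (inv_gauss_series y) - y) as H.
  { unfold inv_gauss_series in H at 1. rewrite Rmult_0_l, gauss_int_0 in H. lra. }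
  apply (is_derive_zero_eq (fun t => gauss_int (inv_gauss_series t) - t)); auto.
  intros t Ht. assert (Ht2 : t ^ 2 < r) by nra.
  pose proof (PSeries_eta_mul_defect t Ht2) as Hprod.
  pose proof (inv_gauss_defect_exp t (proj1 Ht) Ht2) as Hexp.
  pose proof (exp_mul_exp_opp (inv_gauss_series t ^ 2)) as Hinv.
  replace 0 with (PSeries eta (t ^ 2) * exp (- inv_gauss_series t ^ 2) - 1).
  - apply (is_derive_minus (V := R_NormedModule)); [| apply (is_derive_id (K := R_AbsRing))].
    apply (is_derive_comp gauss_int inv_gauss_series);
      [apply is_derive_gauss_int | now apply is_derive_inv_gauss_series].
  - replace (exp (- inv_gauss_series t ^ 2)) with (1 - inv_gauss_defect t); [lra |].
    pose proof (exp_pos (inv_gauss_series t ^ 2)). nra.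
Qed.

End Inversion.

Lemma inv_gauss_series_gauss_int b : 0 <= b ->
  Rbar_lt (Rabs (gauss_int b ^ 2)) (CV_radius eta_int) /\
  inv_gauss_series (gauss_int b) = b.
Proof.
  intros Hb. set (r := gauss_int (b + 1) ^ 2).
  pose proof (CV_radius_eta_ge (b + 1) ltac:(lra)) as Hr.
  pose proof (gauss_int_nonneg b Hb) as Hy0.
  assert (Hy : gauss_int b ^ 2 < r).
  { pose proof (gauss_int_lt b (b + 1) ltac:(lra)). unfold r. nra. }
  split.
  - apply (CV_radius_lt_dominated r Hr); [apply eta_int_bounds |].
    rewrite Rabs_pos_eq; [exact Hy | apply pow2_ge_0].
  - apply gauss_int_inj. now apply (gauss_int_inv_gauss_series r).
Qed.

Lemma normal_int_inverse_series a : 0 <= a ->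
  let c := 2 * normal_int a in
  Rbar_lt (Rabs (PI / 4 * c ^ 2)) (CV_radius eta_int) /\
  2 * a = sqrt (2 * PI) * c * PSeries eta_int (PI / 4 * c ^ 2).
Proof.
  intros Ha c.
  assert (Hs2 : 0 < sqrt 2) by (apply sqrt_lt_R0; lra).
  assert (HsPI : sqrt PI ^ 2 = PI) by (apply pow2_sqrt; pose proof PI_RGT_0; lra).
  assert (Hgauss : gauss_int (a / sqrt 2) = sqrt PI / 2 * c).
  { unfold gauss_int, c. replace (sqrt 2 * (a / sqrt 2)) with a by (field; lra). field. }
  assert (Hsq : gauss_int (a / sqrt 2) ^ 2 = PI / 4 * c ^ 2).
  { rewrite Hgauss. rewrite Rpow_mult_distr. unfold Rdiv. rewrite Rpow_mult_distr, HsPI. field. }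
  destruct (inv_gauss_series_gauss_int (a / sqrt 2)) as [Hrad Hinv];
    [apply Rdiv_le_0_compat; lra |].
  unfold inv_gauss_series in Hinv. rewrite Hsq in Hrad, Hinv. rewrite Hgauss in Hinv.
  split; [exact Hrad |].
  rewrite sqrt_mult_alt by lra.
  transitivity (2 * sqrt 2 * (a / sqrt 2)); [field; lra |].
  rewrite <- Hinv. field.
Qed.

(* The bound comes from [normal_pdf t <= exp (1/2) * exp t / sqrt (2 PI)],
   i.e. [- t^2/2 <= 1/2 + t]. *)
Lemma normal_int_lower_bound v : - (exp (1 / 2) / sqrt (2 * PI)) <= normal_int v.
Proof.
  set (k := exp (1 / 2) / sqrt (2 * PI)).
  assert (Hk : 0 < k) by (apply Rdiv_lt_0_compat; [apply exp_pos | apply sqrt_2PI_pos]).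
  destruct (Rle_lt_dec v 0) as [Hv | Hv].
  - assert (Hmono : normal_int 0 - k * exp 0 <= normal_int v - k * exp v).
    { apply (is_derive_nonneg_le (fun t => - (normal_int t - k * exp t))
               (fun t => - (normal_pdf t - k * exp t)) v 0) in Hv; [lra | |].
      - intros x _. apply (is_derive_opp (V := R_NormedModule)).
        apply (is_derive_minus (V := R_NormedModule));
          [apply is_derive_normal_int | apply is_derive_scal, is_derive_exp].
      - intros x _. unfold normal_pdf, k.
        assert (exp (- x ^ 2 / 2) <= exp (1 / 2) * exp x)
          by (rewrite <- exp_plus; apply exp_le_compat; pose proof (pow2_ge_0 (x + 1)); nra).
        pose proof (Rinv_0_lt_compat _ sqrt_2PI_pos). unfold Rdiv in *. nra. }
    rewrite normal_int_0, exp_0 in Hmono. pose proof (exp_pos v). nra.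
  - pose proof (normal_int_le 0 v (Rlt_le _ _ Hv)). rewrite normal_int_0 in *. lra.
Qed.

Lemma normal_cdf_normal_int : exists c, forall u, normal_cdf u = normal_int u - c.
Proof.
  destruct (nondecreasing_lim_m_infty normal_int _ normal_int_le normal_int_lower_bound)
    as [c Hc].
  exists c. intros u.
  assert (HD : forall x, Derive normal_int x = normal_pdf x)
    by (intros; apply is_derive_unique, is_derive_normal_int).
  change (RInt_gen normal_pdf (Rbar_locally m_infty) (at_point u) = normal_int u - c).
  apply is_RInt_gen_unique, (is_RInt_gen_ext (Derive normal_int)).
  - apply filter_forall. intros. now rewrite HD.
  - apply is_RInt_gen_Derive; [| | exact Hc |].
    + apply filter_forall. intros; eexists; apply is_derive_normal_int.
    + apply filter_forall. intros.
      apply (continuous_ext normal_pdf); [intros; symmetry; apply HD | apply continuous_normal_pdf].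
    + intros P HP. exact (locally_singleton _ _ HP).
Qed.

Lemma BS_atm S T sigma : 0 < S -> 0 < T -> 0 < sigma ->
  BS S S T sigma / S = 2 * normal_int (sigma * sqrt T / 2).
Proof.
  intros HS HT Hsig. destruct normal_cdf_normal_int as [c Hc].
  assert (HsT : sqrt T ^ 2 = T) by (apply pow2_sqrt; lra).
  assert (0 < sqrt T) by (apply sqrt_lt_R0; lra).
  assert (Hln : ln (S / S) = 0) by (rewrite Rdiv_diag, ln_1; lra).
  assert (Hp : d_plus S S T sigma = sigma * sqrt T / 2).
  { unfold d_plus. rewrite Hln, <- HsT at 1. field. lra. }
  assert (Hm : d_minus S S T sigma = - (sigma * sqrt T / 2)).
  { unfold d_minus. rewrite Hln, <- HsT at 1. field. lra. }
  unfold BS. rewrite Hp, Hm, !Hc, normal_int_opp. field. lra.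
Qed.

Theorem proposition6 (S T sigmaLN : R) (hS : 0 < S) (hT : 0 < T) (hsig : 0 < sigmaLN) :
  let C := BS S S T sigmaLN in
  exists l : R,
    is_series (fun k : nat => PI ^ k * eta k / (4 ^ k * (2 * INR k + 1)) * (C / S) ^ (2 * k)) l /\
    sigmaLN = sqrt (2 * PI / T) * (C / S) * l.
Proof.
  intros C. unfold C. rewrite BS_atm by auto.
  set (c := 2 * normal_int (sigmaLN * sqrt T / 2)).
  assert (HsT : 0 < sqrt T) by (apply sqrt_lt_R0; lra).
  destruct (normal_int_inverse_series (sigmaLN * sqrt T / 2)) as [Hrad Hsigma];
    [apply Rdiv_le_0_compat; nra | fold c in Hrad, Hsigma].
  exists (PSeries eta_int (PI / 4 * c ^ 2)). split.
  - eapply is_series_ext; [| apply (PSeries_correct _ _ (CV_radius_inside _ _ Hrad))].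
    intros k. change (pow_n (PI / 4 * c ^ 2) k * eta_int k
                      = PI ^ k * eta k / (4 ^ k * (2 * INR k + 1)) * c ^ (2 * k)).
    unfold eta_int, Rdiv. rewrite pow_n_pow, pow_mult, !Rpow_mult_distr, pow_inv.
    pose proof (pos_INR k). pose proof (pow_lt 4 k ltac:(lra)). field. lra.
  - rewrite sqrt_div_alt by lra. apply (Rmult_eq_reg_r (sqrt T)); [| lra].
    transitivity (2 * (sigmaLN * sqrt T / 2)); [field | rewrite Hsigma; field]; lra.
Qed.
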